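(* For each $n\ge0$ let $w(n)$ be the least integer $m\ge 0$ such that $a(m)\ge n$. If $n\ge 2$ and $k$ is such that $F_k\le n<F_{k+1}$, then $w(n)=F_k+1$.
   Context: Let $(F_n)_{n\ge 0}$ be the Fibonacci numbers: $F_0=0$, $F_1=1$, $F_n=F_{n-1}+F_{n-2}$ for $n\ge 2$. Define $(a(n))_{n\ge 0}$ (OEIS A105774) by $a(0)=0$, $a(1)=1$, and for $n\ge 2$, $a(n)=F_{j+1}-a(n-F_j)$, where $j\ge 2$ is the unique index with $F_j<n\le F_{j+1}$. *)

From Stdlib Require Import ZArith Arith Lia.
Open Scope Z_scope.

Fixpoint fib (n : nat) : nat :=
  match n with
  | O => 0%nat
  | S O => 1%nat
  | S ((S m) as p) => (fib p + fib m)%nat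
  end.

Fixpoint fib_search (fuel j n : nat) : nat :=
  match fuel with
  | O => j
  | S f => if (n <=? fib (S j))%nat then j else fib_search f (S j) n
  end.

(* For n >= 2, the unique j >= 2 with F_j < n <= F_{j+1}
   (the search starting at j = 2 returns the least j >= 2 with n <= F_{j+1};
    since F_3 = 2 <= n... minimality gives F_j < n). *)
Definition fib_index (n : nat) : nat := fib_search n 2 n.

(* a with fuel; values in Z so that subtraction is the true one. *)
Fixpoint a_fuel (fuel n : nat) : Z :=
  match fuel with
  | O => 0
  | S f =>
      if (n <=? 1)%nat then Z.of_nat n
      else let j := fib_index n in
           Z.of_nat (fib (S j)) - a_fuel f (n - fib j)
  end.

(* A105774: a(0)=0, a(1)=1, a(n) = F_{j+1} - a(n - F_j) for F_j < n <= F_{j+1}, j >= 2. *)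
Definition a (n : nat) : Z := a_fuel (S n) n.

Lemma a_0 : a 0 = 0. Proof. reflexivity. Qed.
Lemma a_1 : a 1 = 1. Proof. reflexivity. Qed.

(* w(n) = least m >= 0 with a(m) >= n; we state "w n = m" as the predicate
   below (m satisfies the property and is least such). *)
Definition is_w (n m : nat) : Prop :=
  a m >= Z.of_nat n /\ forall m', (m' < m)%nat -> a m' < Z.of_nat n.

(* Since a(1) = 1, the recursion gives a(F_k + 1) = F_{k+1} - 1 >= n.  Conversely,
   by strong induction every m >= 1 with F_j < m <= F_{j+1} satisfies
   1 <= a(m) <= F_{j+1} - 1: the remainder m - F_j is at most F_{j-1} <= F_{j+1},
   so 1 <= a(m - F_j) <= F_{j+1} - 1.  Hence a(m) <= F_k - 1 < n for all m <= F_k. *)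
From Stdlib Require Import ZArith Arith Lia.

Lemma fib_SS m : fib (S (S m)) = (fib (S m) + fib m)%nat.
Proof. reflexivity. Qed.

Lemma fib_le_succ m : (fib m <= fib (S m))%nat.
Proof. destruct m as [|m]; [simpl; lia|]. rewrite fib_SS. lia. Qed.

Lemma fib_monotone m p : (m <= p)%nat -> (fib m <= fib p)%nat.
Proof. induction 1; [lia|]. pose proof (fib_le_succ m0). lia. Qed.

Lemma fib_pos m : (1 <= m)%nat -> (1 <= fib m)%nat.
Proof. intros H. pose proof (fib_monotone 1 m H). simpl in *. lia. Qed.

Lemma fib_ge_index m : (m <= fib (S m))%nat.
Proof.
  induction m as [m IH] using (well_founded_induction lt_wf).
  destruct m as [|[|m]]; [simpl; lia|simpl; lia|].
  rewrite fib_SS. pose proof (IH (S m) ltac:(lia)). pose proof (fib_pos (S m) ltac:(lia)). lia.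
Qed.

Lemma fib_search_spec fuel : forall j n,
  (fib j < n)%nat -> (n <= fib (S (j + fuel)))%nat ->
  (j <= fib_search fuel j n)%nat /\
  (fib (fib_search fuel j n) < n <= fib (S (fib_search fuel j n)))%nat.
Proof.
  induction fuel as [|fuel IH]; intros j n Hlo Hhi; cbn [fib_search].
  - rewrite Nat.add_0_r in Hhi. lia.
  - destruct (Nat.leb_spec n (fib (S j))); [lia|].
    destruct (IH (S j) n) as [Hj Hspec]; [lia|now rewrite Nat.add_succ_comm|].
    split; [lia|exact Hspec].
Qed.

Lemma fib_index_spec n : (2 <= n)%nat ->
  (2 <= fib_index n)%nat /\ (fib (fib_index n) < n <= fib (S (fib_index n)))%nat.
Proof.
  intros Hn. apply fib_search_spec; [simpl; lia|].
  pose proof (fib_ge_index (2 + n)). lia.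
Qed.

Lemma fib_index_unique n j : (2 <= j)%nat -> (fib j < n <= fib (S j))%nat ->
  fib_index n = j.
Proof.
  intros Hj Hn. pose proof (fib_pos j ltac:(lia)).
  destruct (fib_index_spec n ltac:(lia)) as [Hi Hspec].
  destruct (Nat.lt_total (fib_index n) j) as [Hlt|[Heq|Hgt]]; [|exact Heq|].
  - pose proof (fib_monotone (S (fib_index n)) j Hlt). lia.
  - pose proof (fib_monotone (S j) (fib_index n) Hgt). lia.
Qed.

(* Enough fuel makes [a_fuel] independent of the fuel, because [n - F_j < n]. *)
Lemma a_fuel_stable f1 : forall f2 n, (n < f1)%nat -> (n < f2)%nat ->
  a_fuel f1 n = a_fuel f2 n.
Proof.
  induction f1 as [|f1 IH]; intros f2 n H1 H2; [lia|].
  destruct f2 as [|f2]; [lia|]. cbn [a_fuel].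
  destruct (Nat.leb_spec n 1); [reflexivity|].
  destruct (fib_index_spec n ltac:(lia)) as [Hj Hspec].
  pose proof (fib_pos (fib_index n) ltac:(lia)).
  f_equal. apply IH; lia.
Qed.

Lemma a_rec n : (2 <= n)%nat ->
  a n = Z.of_nat (fib (S (fib_index n))) - a (n - fib (fib_index n)).
Proof.
  intros Hn. unfold a at 1. cbn [a_fuel].
  destruct (Nat.leb_spec n 1); [lia|].
  destruct (fib_index_spec n Hn) as [Hj Hspec].
  pose proof (fib_pos (fib_index n) ltac:(lia)).
  f_equal. apply a_fuel_stable; lia.
Qed.

Lemma a_fib_succ k : (3 <= k)%nat -> a (fib k + 1) = Z.of_nat (fib (S k)) - 1.
Proof.
  intros Hk. pose proof (fib_pos k ltac:(lia)).
  assert (Hidx : fib_index (fib k + 1) = k).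
  { apply fib_index_unique; [lia|].
    destruct k as [|k]; [lia|]. rewrite fib_SS. pose proof (fib_pos k ltac:(lia)). lia. }
  rewrite a_rec by lia. rewrite Hidx, Nat.add_sub_swap, Nat.sub_diag by lia.
  reflexivity.
Qed.

Lemma a_range m : (1 <= m)%nat ->
  1 <= a m /\
  forall t, (3 <= t)%nat -> (m <= fib t)%nat -> a m <= Z.of_nat (fib t) - 1.
Proof.
  induction m as [m IH] using (well_founded_induction lt_wf). intros Hm.
  destruct (Nat.eq_dec m 1) as [->|Hm1].
  { split; [reflexivity|]. intros t Ht _.
    pose proof (fib_monotone 3 t Ht) as H3. change (fib 3) with 2%nat in H3.
    change (a 1) with 1. lia. }
  rewrite a_rec by lia.
  destruct (fib_index_spec m ltac:(lia)) as [Hj [Hlo Hhi]].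
  set (j := fib_index m) in *. clearbody j.
  destruct j as [|[|i]]; [lia|lia|]. rewrite fib_SS in Hhi.
  set (j := S (S i)) in *.
  pose proof (fib_pos j ltac:(lia)).
  assert (Hrest : (m - fib j <= fib (S j))%nat).
  { pose proof (fib_monotone (S i) (S j) ltac:(lia)). lia. }
  destruct (IH (m - fib j)%nat ltac:(lia) ltac:(lia)) as [Hpos Hbound].
  specialize (Hbound (S j) ltac:(lia) Hrest).
  split; [lia|]. intros t Ht Hmt.
  assert (Hjt : (S j <= t)%nat).
  { destruct (Nat.le_gt_cases (S j) t) as [|Hlt]; [assumption|].
    pose proof (fib_monotone t j ltac:(lia)). lia. }
  pose proof (fib_monotone (S j) t Hjt). lia.
Qed.

Theorem proposition20 (n k : nat) :
  (2 <= n)%nat -> (fib k <= n < fib (S k))%nat -> is_w n (fib k + 1).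
Proof.
  intros Hn [Hlo Hhi].
  assert (Hk : (3 <= k)%nat) by (destruct k as [|[|[|k]]]; simpl in *; lia).
  split.
  - rewrite a_fib_succ by exact Hk. lia.
  - intros m Hm. destruct m as [|m]; [change (a 0) with 0; lia|].
    destruct (a_range (S m) ltac:(lia)) as [_ Hbound].
    specialize (Hbound k Hk ltac:(lia)). lia.
Qed.
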